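(* Let $\mathsf{A}=(A_1,A_2,A_3)\in GL_2(\mathbb{R})^3$ be such that $A_3=cI$ for some $c\in\mathbb{R}\setminus\{0\}$ and $(A_1,A_2)$ is irreducible and dominated. Then for every H\''older continuous potential $f:\{1,2,3\}^{\mathbb{N}}\to\mathbb{R}$ and every $C>0$ there exist $\mathtt{i}\in\{1,2,3\}^{\mathbb{N}}$ and $n\in\mathbb{N}$ such that $\bigl|\sum_{k=0}^{n-1}f(\sigma^k\mathtt{i})-\log\|A_{\mathtt{i}|_n}\|\bigr|>C$.
   Context: $\|\cdot\|$ is the operator norm. $\sigma$ is the left shift on $\{1,2,3\}^{\mathbb{N}}$, $\mathtt{i}|_n$ the first $n$ symbols of $\mathtt{i}$, $\mathtt{i}\wedge\mathtt{j}$ the longest common prefix, $A_{i_1\cdots i_n}=A_{i_1}\cdots A_{i_n}$. A potential $f$ is H\''older continuous if $|f(\mathtt{i})-f(\mathtt{j})|\le K\tau^{|\mathtt{i}\wedge\mathtt{j}|}$ for some $K>0$, $0<\tau<1$. $(A_1,A_2)$ is irreducible if no 1-dimensional subspace is invariant under both $A_1$ and $A_2$; it is dominated if there exist $K>0$ and $0<\tau<1$ with $|\det(B_1\cdots B_n)|/\|B_1\cdots B_n\|^2\le K\tau^n$ for all $n$ and all $B_1,\dots,B_n\in\{A_1,A_2\}$. *)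

From HB Require Import structures.
From mathcomp Require Import all_boot all_order all_algebra.
From mathcomp Require Import classical_sets reals exp.
Set Implicit Arguments. Unset Strict Implicit. Unset Printing Implicit Defensive.
Import Order.TTheory GRing.Theory Num.Theory.
Local Open Scope ring_scope.
Local Open Scope classical_set_scope.

Definition vnorm {R : realType} (v : 'cV[R]_2) : R :=
  Num.sqrt (\sum_(i < 2) v i 0 ^+ 2).

Definition opnorm {R : realType} (A : 'M[R]_2) : R :=
  sup [set vnorm (A *m v) | v in [set v : 'cV[R]_2 | vnorm v = 1]].

(* symbolic sequences in {1,2,3}^N, symbols encoded as 'I_3 = {0,1,2} *)
Definition shiftk (k : nat) (i : nat -> 'I_3) : nat -> 'I_3 := fun m => i (m + k)%N.

Definition word_prod {R : realType} (A : 'I_3 -> 'M[R]_2) (i : nat -> 'I_3) (n : nat)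
  : 'M[R]_2 := \prod_(k < n) A (i k).

Definition birkhoff {R : realType} (f : (nat -> 'I_3) -> R) (i : nat -> 'I_3) (n : nat) : R :=
  \sum_(k < n) f (shiftk k i).

(* Hölder continuity: |f i - f j| <= K tau^{|i ^ j|}; stated as: whenever i, j
   agree on their first n symbols (i.e. |i ^ j| >= n), |f i - f j| <= K tau^n. *)
Definition holder {R : realType} (f : (nat -> 'I_3) -> R) : Prop :=
  exists K tau : R, 0 < K /\ 0 < tau /\ tau < 1 /\
    forall (i j : nat -> 'I_3) (n : nat),
      (forall m, (m < n)%N -> i m = j m) -> `|f i - f j| <= K * tau ^+ n.

Definition irreducible_pair {R : realType} (A1 A2 : 'M[R]_2) : Prop :=
  ~ exists v : 'cV[R]_2, v != 0 /\
      (exists a : R, A1 *m v = a *: v) /\ (exists b : R, A2 *m v = b *: v).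

Definition dominated_pair {R : realType} (A1 A2 : 'M[R]_2) : Prop :=
  exists K tau : R, 0 < K /\ 0 < tau /\ tau < 1 /\
    forall (n : nat) (w : 'I_n -> bool),
      let P := \prod_(k < n) (if w k then A1 else A2) in
      `|\det P| / (opnorm P) ^+ 2 <= K * tau ^+ n.

Definition sym1 : 'I_3 := @Ordinal 3 0 isT.
Definition sym2 : 'I_3 := @Ordinal 3 1 isT.
Definition sym3 : 'I_3 := @Ordinal 3 2 isT.

(* Along the sequences 3^m b1 3^m b2 ... 3^m bk 333... the matrix products are
   c^{mk} A_{b1} ... A_{bk}, while Hölder continuity (and f(333...) = log|c|) makes the
   Birkhoff sum of a block 3^m b, minus m log|c|, converge to a constant a_b as m grows.
   Hence the rescaled matrices B_b = e^{-a_b} A_b generate a monoid whose operator norms lie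
   in [e^{-C}, e^C], and domination forces |det B_b| < 1.  In such a monoid every element of
   small determinant has a real eigenvalue of modulus 1, so tr^2 = (1 + det)^2.  Applying this
   to X^k (Y X), k = 0, 1, 2, where X is a high power of B_1 written in its eigenbasis and
   Y = B_2, a Vandermonde argument shows that an eigenvector of X is also one of Y X; it is
   then a common eigenvector of B_1 and B_2, contradicting irreducibility. *)

From mathcomp Require Import all_boot all_order all_algebra zify.
From mathcomp Require Import classical_sets reals exp boolp ring lra normedtype sequences.
Set Implicit Arguments. Unset Strict Implicit. Unset Printing Implicit Defensive.
Import Order.TTheory GRing.Theory Num.Theory numFieldNormedType.Exports.
Local Open Scope ring_scope.
Local Open Scope classical_set_scope.

Section EuclideanNorm.
Variable R : realType.
Implicit Types (a : R) (A B : 'M[R]_2) (u v : 'cV[R]_2).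

Lemma sum2 (F : 'I_2 -> R) : \sum_(i < 2) F i = F 0 + F 1.
Proof. by rewrite big_ord_recl big_ord1; congr (_ + F _); apply: val_inj. Qed.

Lemma ord2P (i : 'I_2) : i = 0 \/ i = 1.
Proof. by case: i => [[|[|k]] Hk] //; [left|right]; apply: val_inj. Qed.

Lemma mulmx2E m n (A : 'M[R]_(m, 2)) (B : 'M[R]_(2, n)) i j :
  (A *m B) i j = A i 0 * B 0 j + A i 1 * B 1 j.
Proof. by rewrite mxE sum2. Qed.

Lemma mulmx_delta_entry m n (A : 'M[R]_(m, n)) i j :
  (A *m (delta_mx j 0 : 'cV_n)) i 0 = A i j.
Proof. by rewrite -colE mxE. Qed.

Lemma cV2P u v : u 0 0 = v 0 0 -> u 1 0 = v 1 0 -> u = v.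
Proof.
move=> e0 e1; apply/matrixP => i j; rewrite [j]ord1.
by case: (ord2P i) => ->.
Qed.

Lemma vnorm_ge0 v : 0 <= vnorm v.
Proof. exact: sqrtr_ge0. Qed.

Lemma vnorm_sqr v : vnorm v ^+ 2 = v 0 0 ^+ 2 + v 1 0 ^+ 2.
Proof. by rewrite /vnorm sum2 sqr_sqrtr // addr_ge0 ?sqr_ge0. Qed.

Lemma vnormZ a v : vnorm (a *: v) = `|a| * vnorm v.
Proof.
by rewrite /vnorm !sum2 !mxE !exprMn -mulrDr sqrtrM ?sqr_ge0 // sqrtr_sqr.
Qed.

Lemma vnorm_eq0 v : (vnorm v == 0) = (v == 0).
Proof.
apply/idP/eqP => [/eqP v0|->]; last by rewrite /vnorm sum2 !mxE expr0n addr0 sqrtr0.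
have := vnorm_sqr v; rewrite v0 expr0n /= => /esym/eqP.
rewrite paddr_eq0 ?sqr_ge0 // !sqrf_eq0 => /andP[/eqP e0 /eqP e1].
by apply: cV2P; rewrite mxE.
Qed.

Lemma vnorm0 : vnorm (0 : 'cV[R]_2) = 0.
Proof. by apply/eqP; rewrite vnorm_eq0. Qed.

Lemma vnorm_gt0 v : (0 < vnorm v) = (v != 0).
Proof. by rewrite lt_def vnorm_eq0 vnorm_ge0 andbT. Qed.

Lemma vnormD u v : vnorm (u + v) <= vnorm u + vnorm v.
Proof.
rewrite -(ler_pXn2r (n := 2)) ?nnegrE ?addr_ge0 ?vnorm_ge0 //.
rewrite vnorm_sqr sqrrD !vnorm_sqr !mxE.
suff : u 0 0 * v 0 0 + u 1 0 * v 1 0 <= vnorm u * vnorm v by lra.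
(* Cauchy-Schwarz, via Lagrange's identity *)
apply: le_trans (ler_norm _) _.
rewrite -(ler_pXn2r (n := 2)) ?nnegrE ?mulr_ge0 ?vnorm_ge0 //.
rewrite real_normK ?num_real // exprMn !vnorm_sqr -subr_ge0.
have -> : (u 0 0 ^+ 2 + u 1 0 ^+ 2) * (v 0 0 ^+ 2 + v 1 0 ^+ 2)
  - (u 0 0 * v 0 0 + u 1 0 * v 1 0) ^+ 2 = (u 0 0 * v 1 0 - u 1 0 * v 0 0) ^+ 2.
  by ring.
exact: sqr_ge0.
Qed.

Lemma norm_entry_le_vnorm v i : `|v i 0| <= vnorm v.
Proof.
rewrite -(ler_pXn2r (n := 2)) ?nnegrE ?vnorm_ge0 // vnorm_sqr real_normK ?num_real //.
have := sqr_ge0 (v 0 0); have := sqr_ge0 (v 1 0).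
by case: (ord2P i) => ->; lra.
Qed.

Lemma vnorm_delta j : vnorm (delta_mx j 0 : 'cV[R]_2) = 1.
Proof.
by rewrite /vnorm sum2 !mxE; case: (ord2P j) => ->;
  rewrite /= expr0n expr1n ?addr0 ?add0r sqrtr1.
Qed.

Definition mx_entry_sum A := \sum_(i < 2) \sum_(j < 2) `|A i j|.

Lemma vnorm_mulmx_entry_sum A v : vnorm (A *m v) <= mx_entry_sum A * vnorm v.
Proof.
apply: le_trans (_ : \sum_(i < 2) `|(A *m v) i 0| <= _).
  rewrite -(ler_pXn2r (n := 2)) ?nnegrE ?vnorm_ge0 ?sumr_ge0 // vnorm_sqr sum2.
  rewrite -(real_normK (num_real ((A *m v) 0 0))) -(real_normK (num_real ((A *m v) 1 0))).
  have := mulr_ge0 (normr_ge0 ((A *m v) 0 0)) (normr_ge0 ((A *m v) 1 0)).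
  rewrite sqrrD; lra.
rewrite /mx_entry_sum mulr_suml; apply: ler_sum => i _.
rewrite mulr_suml mxE; apply: le_trans (ler_norm_sum _ _ _) _.
apply: ler_sum => j _; rewrite normrM.
by apply: ler_wpM2l => //; exact: norm_entry_le_vnorm.
Qed.

End EuclideanNorm.

Section OperatorNorm.
Variable R : realType.
Implicit Types (a : R) (A B : 'M[R]_2) (v : 'cV[R]_2).

Let unit_images A := [set vnorm (A *m v) | v in [set v : 'cV[R]_2 | vnorm v = 1]].

Let has_sup_unit_images A : has_sup (unit_images A).
Proof.
split; first by exists (vnorm (A *m delta_mx 0 0)), (delta_mx 0 0) => //=; exact: vnorm_delta.
exists (mx_entry_sum A) => _ [v /= v1 <-].
by have := vnorm_mulmx_entry_sum A v; rewrite v1 mulr1.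
Qed.

Lemma vnorm_unit_le_opnorm A v : vnorm v = 1 -> vnorm (A *m v) <= opnorm A.
Proof. by move=> v1; apply: sup_upper_bound (has_sup_unit_images A) _ _; exists v. Qed.

Lemma opnorm_le A k : (forall v, vnorm v = 1 -> vnorm (A *m v) <= k) -> opnorm A <= k.
Proof.
move=> Ak; apply: ge_sup; first by case: (has_sup_unit_images A).
by move=> _ [v /= v1 <-]; apply: Ak.
Qed.

Lemma opnorm_ge0 A : 0 <= opnorm A.
Proof. exact: le_trans (vnorm_ge0 _) (vnorm_unit_le_opnorm A (@vnorm_delta R 0)). Qed.

Lemma vnorm_mulmx_le A v : vnorm (A *m v) <= opnorm A * vnorm v.
Proof.
have [->|v0] := eqVneq v 0; first by rewrite mulmx0 vnorm0 mulr0.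
have nv : 0 < vnorm v by rewrite vnorm_gt0.
have v1 : vnorm ((vnorm v)^-1 *: v) = 1.
  by rewrite vnormZ ger0_norm ?invr_ge0 ?vnorm_ge0 // mulVf ?gt_eqF.
have := vnorm_unit_le_opnorm A v1.
by rewrite -scalemxAr vnormZ ger0_norm ?invr_ge0 ?vnorm_ge0 // ler_pdivrMl // mulrC.
Qed.

Lemma opnormM A B : opnorm (A *m B) <= opnorm A * opnorm B.
Proof.
apply: opnorm_le => v v1; rewrite -mulmxA.
apply: le_trans (vnorm_mulmx_le _ _) _.
by apply: ler_wpM2l; [exact: opnorm_ge0 | rewrite -[opnorm B]mulr1 -v1 vnorm_mulmx_le].
Qed.

Lemma opnormZ a A : opnorm (a *: A) = `|a| * opnorm A.
Proof.
have le_opnormZ b B : opnorm (b *: B) <= `|b| * opnorm B.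
  apply: opnorm_le => v v1; rewrite -scalemxAl vnormZ.
  by apply: ler_wpM2l => //; exact: vnorm_unit_le_opnorm.
apply/le_anti; rewrite le_opnormZ /=.
have [->|a0] := eqVneq a 0; first by rewrite normr0 mul0r opnorm_ge0.
have := le_opnormZ a^-1 (a *: A); rewrite scalerA mulVf // scale1r normrV ?unitfE //.
by rewrite ler_pdivlMl ?normr_gt0.
Qed.

Lemma opnormD A B : opnorm (A + B) <= opnorm A + opnorm B.
Proof.
apply: opnorm_le => v v1; rewrite mulmxDl.
apply: le_trans (vnormD _ _) _.
by apply: lerD; rewrite -[opnorm _]mulr1 -v1 vnorm_mulmx_le.
Qed.

Lemma opnormB A B : opnorm (A - B) <= opnorm A + opnorm B.
Proof. by apply: le_trans (opnormD _ _) _; rewrite -scaleN1r opnormZ normrN1 mul1r. Qed.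

Lemma opnorm_scalar a : opnorm (a%:M : 'M[R]_2) = `|a|.
Proof.
rewrite -scalemx1 opnormZ -[RHS]mulr1; congr (_ * _); apply/le_anti/andP; split.
  by apply: opnorm_le => v v1; rewrite mul1mx v1.
by have := vnorm_unit_le_opnorm 1%:M (@vnorm_delta R 0); rewrite mul1mx vnorm_delta.
Qed.

Lemma opnorm1 : opnorm (1 : 'M[R]_2) = 1.
Proof. by rewrite -idmxE opnorm_scalar normr1. Qed.

Lemma norm_entry_le_opnorm A i j : `|A i j| <= opnorm A.
Proof.
rewrite -mulmx_delta_entry.
exact: le_trans (norm_entry_le_vnorm _ _) (vnorm_unit_le_opnorm A (vnorm_delta _ j)).
Qed.

Lemma opnorm_gt0 A : A != 0 -> 0 < opnorm A.
Proof.
move=> A0; rewrite lt_def opnorm_ge0 andbT; apply: contraNneq A0 => nA0.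
apply/eqP/matrixP => i j; rewrite mxE; apply/eqP; rewrite -normr_le0 -nA0.
exact: norm_entry_le_opnorm.
Qed.

Lemma opnorm_unitmx_gt0 A : A \in unitmx -> 0 < opnorm A.
Proof.
move=> A_unit; apply: opnorm_gt0; apply: contraTneq A_unit => ->.
by rewrite unitmxE det0 unitr0.
Qed.

End OperatorNorm.

Section Approximation.
Variable R : realType.

Lemma exists_expr_lt (r e : R) : `|r| < 1 -> 0 < e -> exists n, `|r| ^+ n < e.
Proof.
move=> r1 e0; have /cvgr_dist_lt/(_ e e0) := cvg_expr r1.
by case=> N _ /(_ N (leqnn N)); rewrite /= sub0r normrN normrX; exists N.
Qed.

Lemma le1_of_bounded_expr (r u : R) : 0 <= r -> (forall n, r ^+ n <= u) -> r <= 1.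
Proof.
move=> r0 ru; rewrite leNgt; apply/negP => r1.
have r0' : 0 < r := lt_trans ltr01 r1.
have r1' : `|r^-1| < 1 by rewrite ger0_norm ?invr_ge0 ?invf_lt1 // ltW.
have e0 : 0 < (1 + `|u|)^-1 by rewrite invr_gt0 ltr_pwDl.
have [n] := exists_expr_lt r1' e0.
rewrite ger0_norm ?invr_ge0 // exprVn ltf_pV2 ?posrE ?exprn_gt0 ?ltr_pwDl //.
by have := ru n; have := ler_norm u; lra.
Qed.


Lemma le_of_le_add_expr (x y k r : R) : `|r| < 1 -> (forall m, x <= y + k * r ^+ m) -> x <= y.
Proof.
move=> r1 xy; rewrite leNgt; apply/negP => yx.
have k1 : 0 < 1 + `|k| by have := normr_ge0 k; lra.
have xy0 : 0 < x - y by rewrite subr_gt0.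
have [m] := exists_expr_lt r1 (divr_gt0 xy0 k1).
rewrite ltr_pdivlMr // => rm.
have : k * r ^+ m <= `|k| * `|r| ^+ m by rewrite -normrX -normrM ler_norm.
have := xy m; have := normr_ge0 k; have := exprn_ge0 m (normr_ge0 r); nra.
Qed.

Lemma sup_approx (x e : nat -> R) : (forall m, 0 <= e m) ->
  (forall m, `|x m.+1 - x m| <= e m - e m.+1) ->
  forall m, `|x m - sup (range (fun n => x n - e n))| <= e m.
Proof.
move=> e_ge0 xe.
have /nondecreasing_seqP lower : forall m, x m - e m <= x m.+1 - e m.+1.
  by move=> m; have := xe m; rewrite ler_norml => /andP[]; lra.
have /nonincreasing_seqP upper : forall m, x m.+1 + e m.+1 <= x m + e m.
  by move=> m; have := xe m; rewrite ler_norml => /andP[]; lra.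
have lower_upper n p : x n - e n <= x p + e p.
  have := e_ge0 n; have := e_ge0 p.
  case: (leqP n p) => [/lower|/ltnW/upper]; lra.
have has_sup_lower : has_sup (range (fun n => x n - e n)).
  by split; [exists (x 0%N - e 0%N), 0%N | exists (x 0%N + e 0%N) => _ [n _ <-]].
move=> m; rewrite ler_norml; apply/andP; split.
  suff : sup (range (fun n => x n - e n)) <= x m + e m by lra.
  by apply: ge_sup => [|_ [n _ <-]]; [case: has_sup_lower|].
suff : x m - e m <= sup (range (fun n => x n - e n)) by lra.
by apply: sup_upper_bound => //; exists m.
Qed.

End Approximation.

Lemma det_expr (T : comNzRingType) k (M : 'M[T]_k.+1) n : \det (M ^+ n) = \det M ^+ n.
Proof.
elim: n => [|n IHn]; first by rewrite !expr0 det1.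
by rewrite !exprS -mulmxE det_mulmx IHn.
Qed.

Section Matrix2.
Variable R : realType.
Implicit Types (a b c e : R) (M : 'M[R]_2) (v w : 'cV[R]_2).

Lemma det_mx2 M : \det M = M 0 0 * M 1 1 - M 0 1 * M 1 0.
Proof.
rewrite (expand_det_row _ 0) sum2 /cofactor !det_mx11 !mxE /=.
have -> : lift 0 (0 : 'I_1) = 1 :> 'I_2 by apply: val_inj.
have -> : lift 1 (0 : 'I_1) = 0 :> 'I_2 by apply: val_inj.
by rewrite /= expr0 expr1 mul1r; ring.
Qed.

Lemma trace_mx2 M : \tr M = M 0 0 + M 1 1.
Proof. by rewrite /mxtrace sum2. Qed.

Lemma cayley_hamilton_mx2 M : M * M = \tr M *: M - \det M *: 1.
Proof.
apply/matrixP => i j; rewrite -mulmxE mulmx2E !mxE trace_mx2 det_mx2.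
by case: (ord2P i) => ->; case: (ord2P j) => -> /=; ring.
Qed.

Definition cross v w := v 0 0 * w 1 0 - v 1 0 * w 0 0.

Lemma crossC v w : cross w v = - cross v w.
Proof. by rewrite /cross; ring. Qed.

Lemma cross_combination a b c e v w :
  cross (a *: v + b *: w) (c *: v + e *: w) = (a * e - b * c) * cross v w.
Proof. by rewrite /cross !mxE; ring. Qed.

Lemma mxtrace_cross M v w : \tr M * cross v w = cross (M *m v) w + cross v (M *m w).
Proof. by rewrite /cross !mulmx2E trace_mx2; ring. Qed.

Lemma det_cross M v w : \det M * cross v w = cross (M *m v) (M *m w).
Proof. by rewrite /cross !mulmx2E det_mx2; ring. Qed.

Lemma cross_eq0 v w : v != 0 -> cross v w = 0 -> exists k, w = k *: v.
Proof.
move=> v0 /eqP; rewrite subr_eq0 => /eqP vw.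
have [v00|v00] := eqVneq (v 0 0) 0.
  have v10 : v 1 0 != 0 by apply: contraNneq v0 => v10; apply/eqP/cV2P; rewrite mxE.
  exists (w 1 0 / v 1 0); apply: cV2P; rewrite !mxE ?divfK // v00 mulr0.
  by move: vw; rewrite v00 mul0r => /esym/eqP; rewrite mulf_eq0 (negbTE v10) => /eqP.
exists (w 0 0 / v 0 0); apply: cV2P; rewrite !mxE ?divfK //.
by rewrite mulrAC -[w 0 0 * _]mulrC -vw mulrC mulKf.
Qed.

Lemma basis_decomp v w x : cross v w != 0 -> exists a b, x = a *: v + b *: w.
Proof.
move=> vw; exists (cross x w / cross v w), (cross v x / cross v w).
by apply: cV2P; rewrite !mxE; move: vw; rewrite /cross => vw; field.
Qed.

Lemma trace_det_in_basis M v w a b c e : cross v w != 0 ->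
  M *m v = a *: v + b *: w -> M *m w = c *: v + e *: w ->
  \tr M = a + e /\ \det M = a * e - b * c.
Proof.
move=> vw Mv Mw; split; apply: (mulIf vw).
  by rewrite mxtrace_cross Mv Mw /cross !mxE; ring.
by rewrite det_cross Mv Mw cross_combination.
Qed.

End Matrix2.

Section Eigenvalues.
Variable R : realType.
Implicit Types (l : R) (M : 'M[R]_2) (v w : 'cV[R]_2).

Lemma eigen_factor M l1 l2 : l1 + l2 = \tr M -> l1 * l2 = \det M ->
  M * (M - l2 *: 1) = l1 *: (M - l2 *: 1).
Proof.
move=> tr12 det12; rewrite mulrBr -scalerAr mulr1 cayley_hamilton_mx2 -tr12 -det12.
by rewrite scalerBr scalerA scalerDl addrAC addrK.
Qed.

Lemma eigen_factor_neq0 M l1 l2 : l1 + l2 = \tr M -> l1 != l2 -> M - l2 *: 1 != 0.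
Proof.
move=> tr12; apply: contra_neq => /eqP; rewrite subr_eq0 => /eqP M_scalar.
move: tr12; rewrite M_scalar mxtraceZ -idmxE mxtrace_scalar /=; lra.
Qed.

Lemma real_eigenvalues M : 4 * \det M < \tr M ^+ 2 ->
  exists l1 l2, [/\ l1 != l2, l1 + l2 = \tr M & l1 * l2 = \det M].
Proof.
set t := \tr M; set d := \det M => disc.
have s_gt0 : 0 < Num.sqrt (t ^+ 2 - 4 * d) by rewrite sqrtr_gt0 subr_gt0.
have s_sqr : Num.sqrt (t ^+ 2 - 4 * d) ^+ 2 = t ^+ 2 - 4 * d.
  by rewrite sqr_sqrtr // subr_ge0 ltW.
move: s_gt0 s_sqr; set s := Num.sqrt _ => s_gt0 s_sqr.
exists ((t + s) / 2), ((t - s) / 2); split.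
- by apply/eqP => e; move: s_gt0; lra.
- by field.
- have -> : (t + s) / 2 * ((t - s) / 2) = (t ^+ 2 - s ^+ 2) / 4 by field.
  by rewrite s_sqr; field.
Qed.

Lemma eigenvector_of_factor M l1 l2 : l1 + l2 = \tr M -> l1 * l2 = \det M -> l1 != l2 ->
  exists2 v : 'cV[R]_2, v != 0 & M *m v = l1 *: v.
Proof.
move=> tr12 det12 l12; set P := M - l2 *: 1.
have [j Pj] : exists j, P *m (delta_mx j 0 : 'cV[R]_2) != 0.
  apply/existsP; apply: contraNT (eigen_factor_neq0 tr12 l12) => /existsPn P0.
  apply/eqP/matrixP => i j; have := P0 j; rewrite negbK => /eqP/matrixP/(_ i 0).
  by rewrite mulmx_delta_entry !mxE.
exists (P *m delta_mx j 0) => //.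
by rewrite mulmxA mulmxE (eigen_factor tr12 det12) -scalemxAl.
Qed.

Lemma eigenvectors_cross_neq0 M l1 l2 v w : v != 0 -> w != 0 ->
  M *m v = l1 *: v -> M *m w = l2 *: w -> l1 != l2 -> cross v w != 0.
Proof.
move=> v0 w0 Mv Mw l12; apply/eqP => /(cross_eq0 v0) [k wk].
have : (l1 - l2) *: w == 0.
  by rewrite scalerBl -Mw wk -scalemxAr Mv !scalerA mulrC subrr.
by rewrite scaler_eq0 subr_eq0 (negbTE l12) (negbTE w0).
Qed.

Lemma eigenbasis M l1 l2 : l1 != l2 -> l1 + l2 = \tr M -> l1 * l2 = \det M ->
  exists v w, [/\ M *m v = l1 *: v, M *m w = l2 *: w & cross v w != 0].
Proof.
move=> l12 tr12 det12.
have [v v0 Mv] := eigenvector_of_factor tr12 det12 l12.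
have [w w0 Mw] : exists2 w : 'cV[R]_2, w != 0 & M *m w = l2 *: w.
  by apply: (eigenvector_of_factor (l1 := l2) (l2 := l1)); rewrite 1?addrC 1?mulrC 1?eq_sym.
by exists v, w; split; rewrite // (eigenvectors_cross_neq0 v0 w0 Mv Mw l12).
Qed.

Lemma eigenspace_line M l1 l2 v w x : cross v w != 0 -> l1 != l2 ->
  M *m v = l1 *: v -> M *m w = l2 *: w -> M *m x = l1 *: x -> exists k, x = k *: v.
Proof.
move=> vw l12 Mv Mw Mx; have [p [q xE]] := basis_decomp x vw.
have cross_v (a b : R) : cross v (a *: v + b *: w) = b * cross v w.
  by rewrite /cross !mxE; ring.
have e1 : cross v (M *m x) = l1 * q * cross v w.
  by rewrite Mx xE scalerDr !scalerA cross_v.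
have e2 : cross v (M *m x) = l2 * q * cross v w.
  by rewrite xE mulmxDr -!scalemxAr Mv Mw !scalerA cross_v [q * _]mulrC.
have /eqP : (l1 - l2) * q * cross v w = 0 by rewrite !mulrBl -e1 -e2 subrr.
rewrite !mulf_eq0 subr_eq0 (negbTE l12) (negbTE vw) orbF /= => /eqP q0.
by exists p; rewrite xE q0 scale0r addr0.
Qed.

End Eigenvalues.

Section BoundedPowers.
Variable R : realType.
Implicit Types (l lo u : R) (M P : 'M[R]_2).

Lemma eigen_factor_expr M P l : M * P = l *: P -> forall n, M ^+ n * P = l ^+ n *: P.
Proof.
move=> MP; elim=> [|n IHn]; first by rewrite !expr0 mul1r scale1r.
by rewrite exprSr -mulrA MP -scalerAr IHn scalerA -exprS.
Qed.

Lemma eigenvalue_le1 M P l u : P != 0 -> M * P = l *: P ->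
  (forall n, opnorm (M ^+ n) <= u) -> `|l| <= 1.
Proof.
move=> P0 MP Mu; apply: (@le1_of_bounded_expr _ _ u) => // n.
have P_gt0 := opnorm_gt0 P0.
rewrite -(ler_pM2r P_gt0) -normrX -opnormZ -(eigen_factor_expr MP).
apply: le_trans (opnormM _ _) _.
by apply: ler_wpM2r; [exact: ltW | exact: Mu].
Qed.

Lemma eigen_factor_sub_expr M l1 l2 n : l1 + l2 = \tr M -> l1 * l2 = \det M ->
  (l1 - l2) *: M ^+ n = l1 ^+ n *: (M - l2 *: 1) - l2 ^+ n *: (M - l1 *: 1).
Proof.
move=> tr12 det12.
have M1 := eigen_factor tr12 det12.
have M2 : M * (M - l1 *: 1) = l2 *: (M - l1 *: 1).
  by apply: eigen_factor; rewrite 1?addrC 1?mulrC.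
rewrite -(eigen_factor_expr M1) -(eigen_factor_expr M2) -mulrBr.
have -> : M - l2 *: 1 - (M - l1 *: 1) = (l1 - l2) *: 1 by rewrite scalerBl opprB addrC subrKA.
by rewrite -scalerAr mulr1.
Qed.

Lemma unit_eigenvalue M lo u l1 l2 : 0 < lo -> (forall n, lo <= opnorm (M ^+ n) <= u) ->
  l1 != l2 -> l1 + l2 = \tr M -> l1 * l2 = \det M -> `|l1| = 1 \/ `|l2| = 1.
Proof.
move=> lo_gt0 Mn l12 tr12 det12.
have Mu n : opnorm (M ^+ n) <= u by case/andP: (Mn n).
have tr21 : l2 + l1 = \tr M by rewrite addrC.
have det21 : l2 * l1 = \det M by rewrite mulrC.
have l21 : l2 != l1 by rewrite eq_sym.
have le1 := eigenvalue_le1 (eigen_factor_neq0 tr12 l12) (eigen_factor tr12 det12) Mu.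
have le2 := eigenvalue_le1 (eigen_factor_neq0 tr21 l21) (eigen_factor tr21 det21) Mu.
case: (eqVneq `|l1| 1) => [|n1]; first by left.
case: (eqVneq `|l2| 1) => [|n2]; first by right.
exfalso; set r := Num.max `|l1| `|l2|.
have r_ge0 : 0 <= r by rewrite le_max normr_ge0.
have r_lt1 : `|r| < 1 by rewrite ger0_norm // gt_max !lt_neqAle n1 n2 le1 le2.
set Q := opnorm (M - l2 *: 1) + opnorm (M - l1 *: 1).
have Q_ge0 : 0 <= Q by rewrite addr_ge0 ?opnorm_ge0.
have d_gt0 : 0 < `|l1 - l2| * lo by rewrite mulr_gt0 // normr_gt0 subr_eq0.
have [n rn] := exists_expr_lt r_lt1 (divr_gt0 d_gt0 (ltr_pwDl ltr01 Q_ge0)).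
have := opnormB (l1 ^+ n *: (M - l2 *: 1)) (l2 ^+ n *: (M - l1 *: 1)).
rewrite -eigen_factor_sub_expr // !opnormZ !normrX.
have r1 : `|l1| ^+ n <= r ^+ n by rewrite lerXn2r ?nnegrE ?normr_ge0 // le_max lexx.
have r2 : `|l2| ^+ n <= r ^+ n by rewrite lerXn2r ?nnegrE ?normr_ge0 // le_max lexx orbT.
have lon : `|l1 - l2| * lo <= `|l1 - l2| * opnorm (M ^+ n).
  by rewrite ler_wpM2l //; case/andP: (Mn n).
move: rn; rewrite (ger0_norm r_ge0) ltr_pdivlMr ?ltr_pwDl //.
have := opnorm_ge0 (M - l2 *: 1); have := opnorm_ge0 (M - l1 *: 1).
have := exprn_ge0 n r_ge0; rewrite /Q; nra.
Qed.

Lemma sqr_add_eq_of_unit (a b : R) : `|a| = 1 \/ `|b| = 1 -> (a + b) ^+ 2 = (1 + a * b) ^+ 2.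
Proof.
have sqr1 (x : R) : `|x| = 1 -> x ^+ 2 = 1.
  by move=> x1; rewrite -(real_normK (num_real x)) x1 expr1n.
move=> ab; apply/eqP; rewrite -subr_eq0.
have -> : (a + b) ^+ 2 - (1 + a * b) ^+ 2 = - ((a ^+ 2 - 1) * (b ^+ 2 - 1)) by ring.
by case: ab => /sqr1 ->; rewrite subrr ?mul0r ?mulr0 oppr0.
Qed.

Lemma discriminant_gt0 M lo u : 0 < lo -> opnorm M <= u -> lo <= opnorm (M * M) ->
  2 * `|\det M| <= lo -> 16 * u ^+ 2 * `|\det M| < lo ^+ 2 -> 4 * \det M < \tr M ^+ 2.
Proof.
move=> lo_gt0 Mu loM2 det_lo det_lo2.
(* [M^2 = tr M * M - det M] forces [lo <= |tr M| u + |det M|] *)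
have := opnormB (\tr M *: M) (\det M *: 1).
rewrite -cayley_hamilton_mx2 !opnormZ opnorm1 mulr1 => M2.
have tu : `|\tr M| * opnorm M <= `|\tr M| * u by rewrite ler_wpM2l.
have := ler_norm (\det M); rewrite -[\tr M ^+ 2]real_normK ?num_real //.
have := opnorm_ge0 M; have := normr_ge0 (\tr M); nra.
Qed.

End BoundedPowers.

Section SharedEigenvector.
Variable R : realType.
Implicit Types (M X Y : 'M[R]_2) (v w : 'cV[R]_2).

Lemma quadratic_three_roots (c0 c1 c2 x y z : R) : x != y -> y != z -> x != z ->
  c0 + c1 * x + c2 * x ^+ 2 = 0 -> c0 + c1 * y + c2 * y ^+ 2 = 0 ->
  c0 + c1 * z + c2 * z ^+ 2 = 0 -> c1 = 0.
Proof.
move=> xy yz xz px py pz.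
have slope (s t : R) : s != t -> c0 + c1 * s + c2 * s ^+ 2 = 0 ->
    c0 + c1 * t + c2 * t ^+ 2 = 0 -> c1 + c2 * (s + t) = 0.
  move=> st ps pt; apply: (mulfI (_ : s - t != 0)); first by rewrite subr_eq0.
  rewrite mulr0; transitivity ((c0 + c1 * s + c2 * s ^+ 2) - (c0 + c1 * t + c2 * t ^+ 2)).
    by ring.
  by rewrite ps pt subrr.
have sxy := slope _ _ xy px py; have syz := slope _ _ yz py pz.
have : c2 * (x - z) = (c1 + c2 * (x + y)) - (c1 + c2 * (y + z)) by ring.
rewrite sxy syz subrr => /eqP; rewrite mulf_eq0 subr_eq0 (negbTE xz) orbF => /eqP c20.
by move: sxy; rewrite c20 mul0r addr0.
Qed.

Lemma expr_eigen M l v : M *m v = l *: v -> forall k, M ^+ k *m v = l ^+ k *: v.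
Proof.
move=> Mv; elim=> [|k IHk]; first by rewrite !expr0 mul1mx scale1r.
by rewrite exprS -mulmxE -mulmxA IHk -scalemxAr Mv scalerA -exprSr.
Qed.

Lemma shared_eigenvector X Y la mu v w :
  cross v w != 0 -> X *m v = la *: v -> X *m w = mu *: w -> la ^+ 2 = 1 ->
  la * mu != 0 -> `|la * mu| < 1 ->
  (forall k, (k <= 2)%N -> \tr (X ^+ k * Y) ^+ 2 = (1 + \det (X ^+ k * Y)) ^+ 2) ->
  (exists b, Y *m v = b *: v) \/ (exists b, Y *m w = b *: w).
Proof.
move=> vw Xv Xw la2 d0 d1 XkY; set d := la * mu in d0 d1.
have [a [b Yv]] := basis_decomp (Y *m v) vw.
have [c [e Yw]] := basis_decomp (Y *m w) vw.
(* in the eigenbasis, [X^k Y] has trace [la^k (a + e d^k)] and determinant [(ae - bc) d^k] *)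
have root k : (k <= 2)%N ->
    (a ^+ 2 - 1) + (2 * b * c) * d ^+ k + (e ^+ 2 - (a * e - b * c) ^+ 2) * (d ^+ k) ^+ 2 = 0.
  move=> k2; have lak : (la ^+ k) ^+ 2 = 1 by rewrite -exprM mulnC exprM la2 expr1n.
  have muk : mu ^+ k = la ^+ k * d ^+ k by rewrite exprMn mulrA -expr2 lak mul1r.
  have XkYE u (p q : R) : Y *m u = p *: v + q *: w ->
      (X ^+ k * Y) *m u = (p * la ^+ k) *: v + (q * mu ^+ k) *: w.
    move=> Yu; rewrite -mulmxE -mulmxA Yu mulmxDr -!scalemxAr.
    by rewrite (expr_eigen Xv) (expr_eigen Xw) !scalerA.
  have [tr det] := trace_det_in_basis vw (XkYE _ _ _ Yv) (XkYE _ _ _ Yw).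
  have := XkY k k2; rewrite tr det muk => /eqP; rewrite -subr_eq0 => /eqP <-.
  move: lak; set L := la ^+ k; set t := d ^+ k => lak.
  have -> : (a * L + e * (L * t)) ^+ 2 = L ^+ 2 * (a + e * t) ^+ 2 by ring.
  have -> : a * L * (e * (L * t)) - b * (L * t) * (c * L) = L ^+ 2 * ((a * e - b * c) * t).
    by ring.
  by rewrite lak !mul1r; ring.
have d_neq1 (t : R) : `|t| < 1 -> t != 1 by apply: contraTneq => ->; rewrite normr1 ltxx.
have d2_1 : `|d ^+ 2| < 1 by rewrite normrX exprn_ilt1.
have bc0 : 2 * b * c = 0.
  apply: (quadratic_three_roots (c0 := a ^+ 2 - 1) (c2 := e ^+ 2 - (a * e - b * c) ^+ 2)
    (x := 1) (y := d) (z := d ^+ 2)).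
  - by rewrite eq_sym d_neq1.
  - apply: contraTneq d1 => dd.
    have /eqP : d * (d - 1) = 0 by rewrite mulrBr -expr2 -dd mulr1 subrr.
    by rewrite mulf_eq0 (negbTE d0) subr_eq0 => /eqP ->; rewrite normr1 ltxx.
  - by rewrite eq_sym d_neq1.
  - by have := root 0%N isT; rewrite expr0 expr1n.
  - by have := root 1%N isT; rewrite expr1.
  - by have := root 2%N isT; rewrite exprMn.
move/eqP: bc0; rewrite -mulrA mulf_eq0 pnatr_eq0 /= mulf_eq0 => /orP[]/eqP bc0.
  by left; exists a; rewrite Yv bc0 scale0r addr0.
by right; exists e; rewrite Yw bc0 scale0r add0r.
Qed.

End SharedEigenvector.

Section BoundedMonoid.
Variable R : realType.
Variables (S : 'M[R]_2 -> Prop) (lo hi : R).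
Hypotheses (S1 : S 1) (SM : forall M N, S M -> S N -> S (M * N)).
Hypotheses (lo_gt0 : 0 < lo) (S_opnorm : forall M, S M -> lo <= opnorm M <= hi).
Implicit Types (M X Y : 'M[R]_2) (v w : 'cV[R]_2).

Lemma monoid_expr M n : S M -> S (M ^+ n).
Proof. by move=> SM0; elim: n => [|n IHn]; rewrite ?expr0 // exprS; apply: SM. Qed.

Let lo_le_hi : lo <= hi.
Proof. by case/andP: (S_opnorm S1) => /le_trans; apply. Qed.

Let hi_gt0 : 0 < hi. Proof. exact: lt_le_trans lo_le_hi. Qed.

Let eta := Num.min (lo / 2) (lo ^+ 2 / (16 * hi ^+ 2)).

Let eta_gt0 : 0 < eta.
Proof. by rewrite lt_min !divr_gt0 ?exprn_gt0 ?mulr_gt0. Qed.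

Lemma monoid_unit_eigenvalue M : S M -> `|\det M| < eta ->
  exists l1 l2, [/\ l1 != l2, l1 + l2 = \tr M, l1 * l2 = \det M & `|l1| = 1].
Proof.
move=> SM0 small; have [|l1 [l2 [l12 tr12 det12]]] := real_eigenvalues (M := M).
  case/andP: (S_opnorm SM0) => _ Mhi; case/andP: (S_opnorm (SM SM0 SM0)) => loM2 _.
  apply: discriminant_gt0 lo_gt0 Mhi loM2 _ _.
    by move: small; rewrite lt_min => /andP[/ltW small _]; rewrite mulrC -ler_pdivlMr.
  by move: small; rewrite lt_min => /andP[_]; rewrite ltr_pdivlMr ?mulr_gt0 ?exprn_gt0 // mulrC.
have Mn n : lo <= opnorm (M ^+ n) <= hi by apply/S_opnorm/monoid_expr.
case: (unit_eigenvalue lo_gt0 Mn l12 tr12 det12) => l_unit.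
  by exists l1, l2.
by exists l2, l1; rewrite eq_sym addrC mulrC.
Qed.

Lemma monoid_trace_sqr M : S M -> `|\det M| < eta -> \tr M ^+ 2 = (1 + \det M) ^+ 2.
Proof.
move=> SM0 small; have [l1 [l2 [_ <- <- l1_unit]]] := monoid_unit_eigenvalue SM0 small.
by rewrite sqr_add_eq_of_unit //; left.
Qed.

Lemma common_eigenvector_of_power X Y n l1 l2 v w : cross v w != 0 -> l1 != l2 -> l1 != 0 ->
  X ^+ n *m v = l1 *: v -> X ^+ n *m w = l2 *: w -> (exists b, (Y * X ^+ n) *m v = b *: v) ->
  (exists a, X *m v = a *: v) /\ (exists b, Y *m v = b *: v).
Proof.
move=> vw l12 l1_neq0 Xnv Xnw [b YXv]; split.
  apply: (eigenspace_line vw l12 Xnv Xnw).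
  by rewrite mulmxA mulmxE -exprSr exprS -mulmxE -mulmxA Xnv -scalemxAr.
exists (b / l1); apply: (scalerI l1_neq0).
by rewrite scalerA mulrC divfK // -YXv -mulmxE -mulmxA Xnv scalemxAr.
Qed.

Theorem monoid_common_eigenvector X Y : S X -> S Y ->
  \det X != 0 -> `|\det X| < 1 -> `|\det Y| <= 1 ->
  exists v, v != 0 /\ (exists a, X *m v = a *: v) /\ (exists b, Y *m v = b *: v).
Proof.
move=> SX SY dX0 dX1 dY1; set x := `|\det X|.
have x_ge0 : 0 <= x := normr_ge0 _.
have x_lt1 : `|x| < 1 by rewrite ger0_norm.
have [N] := exists_expr_lt x_lt1 eta_gt0; rewrite ger0_norm // => xN.
set X' := X ^+ N.+1; have SX' : S X' := monoid_expr _ SX.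
have detX'_small : `|\det X'| <= x ^+ N.
  by rewrite det_expr normrX exprS ler_piMl ?exprn_ge0 // ltW.
have small k : `|\det (X' ^+ k * (Y * X'))| < eta.
  rewrite -!mulmxE !det_mulmx det_expr !normrM normrX mulrA; apply: le_lt_trans xN.
  apply: (le_trans (_ : _ <= `|\det X'|) detX'_small).
  have dX'1 : `|\det X'| <= 1 by rewrite det_expr normrX exprn_ile1 // ltW.
  by rewrite -[X in _ <= X]mul1r ler_wpM2r // -[1]mulr1 ler_pM ?exprn_ge0 ?exprn_ile1.
have [la [mu [lamu tr det la_unit]]] :=
  monoid_unit_eigenvalue SX' (le_lt_trans detX'_small xN).
have [v [w [X'v X'w vw]]] := eigenbasis lamu tr det.
have d0 : la * mu != 0 by rewrite det det_expr expf_neq0.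
have d1 : `|la * mu| < 1 by rewrite det det_expr normrX exprn_ilt1.
have la2 : la ^+ 2 = 1 by rewrite -(real_normK (num_real la)) la_unit expr1n.
have [la0 mu0] : la != 0 /\ mu != 0 by apply/andP; rewrite -negb_or -mulf_eq0.
have neq0 u u' : cross u u' != 0 -> u != 0.
  by apply: contraNneq => ->; rewrite /cross !mxE !mul0r subrr.
have trace_sqr k (_ : (k <= 2)%N) :=
  monoid_trace_sqr (SM (monoid_expr k SX') (SM SY SX')) (small k).
have [YX'v|YX'w] := shared_eigenvector vw X'v X'w la2 d0 d1 trace_sqr.
  exists v; split; first exact: neq0 vw.
  exact: common_eigenvector_of_power vw lamu la0 X'v X'w _.
have wv : cross w v != 0 by rewrite crossC oppr_eq0.
exists w; split; first exact: neq0 wv.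
by apply: common_eigenvector_of_power wv _ mu0 X'w X'v _; rewrite // eq_sym.
Qed.

End BoundedMonoid.

Definition symb (b : bool) : 'I_3 := if b then sym1 else sym2.

Definition const3 : nat -> 'I_3 := fun=> sym3.

(* [pad3 m [:: b1; ...; bk]] is the sequence 3^m b1 3^m b2 ... 3^m bk 333... *)
Fixpoint pad3 (m : nat) (s : seq bool) : nat -> 'I_3 :=
  if s is b :: s' then
    fun k => if (k < m)%N then sym3 else if k == m then symb b else pad3 m s' (k - m.+1)
  else const3.

Lemma pad3_lt m s k : (k < m)%N -> pad3 m s k = sym3.
Proof. by case: s => [|b s] //= ->. Qed.

Lemma shiftk_shiftk a k (x : nat -> 'I_3) : shiftk k (shiftk a x) = shiftk (k + a) x.
Proof. by apply: funext => j; rewrite /shiftk addnA. Qed.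

Lemma shiftk_pad3 m b s : shiftk m.+1 (pad3 m (b :: s)) = pad3 m s.
Proof.
apply: funext => j; rewrite /shiftk /= addnK.
have -> : (j + m.+1 < m)%N = false by lia.
by have -> : (j + m.+1 == m) = false by lia.
Qed.

Lemma pad3_cons_prefix m b s k : (k < m.+1 + m)%N -> pad3 m (b :: s) k = pad3 m [:: b] k.
Proof.
move=> km /=; case: ifP => // k_ge; case: ifP => // k_neq.
by rewrite pad3_lt //; lia.
Qed.

Lemma shift1_pad3 m b : shiftk 1 (pad3 m.+1 [:: b]) = pad3 m [:: b].
Proof. by apply: funext => j; rewrite /shiftk /= addn1 ltnS eqSS subSS. Qed.

Section WordProducts.
Variables (R : realType) (A : 'I_3 -> 'M[R]_2) (c : R).
Hypothesis A3 : A sym3 = c%:M.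

Definition symb_prod (s : seq bool) : 'M[R]_2 := \prod_(b <- s) A (symb b).

Lemma word_prod_add x a n :
  word_prod A x (a + n) = word_prod A x a * word_prod A (shiftk a x) n.
Proof.
rewrite /word_prod big_split_ord /=; congr (_ * _).
by apply: eq_bigr => k _; rewrite /shiftk addnC.
Qed.

Lemma word_prod_const3 n : word_prod A const3 n = (c ^+ n)%:M.
Proof.
rewrite /word_prod (eq_bigr (fun=> c%:M)) => [|k _]; last exact: A3.
by rewrite prodr_const card_ord rmorphXn.
Qed.

Lemma word_prod_pad3 m s :
  word_prod A (pad3 m s) (size s * m.+1) = c ^+ (m * size s) *: symb_prod s.
Proof.
elim: s => [|b s IHs]; first by rewrite /word_prod /symb_prod big_nil big_ord0 muln0 scale1r.
have block : word_prod A (pad3 m (b :: s)) m.+1 = c ^+ m *: A (symb b).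
  rewrite /word_prod big_ord_recr /= ltnn eqxx.
  rewrite (eq_bigr (fun=> c%:M)) => [|k _]; last by rewrite ltn_ord A3.
  by rewrite prodr_const card_ord -rmorphXn -mulmxE mul_scalar_mx.
rewrite /= mulSn word_prod_add block shiftk_pad3 IHs /symb_prod big_cons.
by rewrite -scalerAl -scalerAr scalerA -exprD mulnS.
Qed.

End WordProducts.

Section BirkhoffSums.
Variables (R : realType) (f : (nat -> 'I_3) -> R) (K tau : R).
Hypotheses (K_ge0 : 0 <= K) (tau_gt0 : 0 < tau) (tau_lt1 : tau < 1).
Hypothesis f_holder : forall (i j : nat -> 'I_3) (n : nat),
  (forall m, (m < n)%N -> i m = j m) -> `|f i - f j| <= K * tau ^+ n.

Definition holder_tail p := K * tau ^+ p.+1 / (1 - tau).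

Lemma holder_tail_ge0 p : 0 <= holder_tail p.
Proof. by rewrite /holder_tail divr_ge0 ?mulr_ge0 ?exprn_ge0 // ?subr_ge0 ltW. Qed.

Lemma holder_tailS p : holder_tail p - holder_tail p.+1 = K * tau ^+ p.+1.
Proof.
rewrite /holder_tail (exprS tau p.+1); field.
by rewrite subr_eq0 eq_sym lt_eqF.
Qed.

Lemma birkhoff_add x a n : birkhoff f x (a + n) = birkhoff f x a + birkhoff f (shiftk a x) n.
Proof.
rewrite /birkhoff big_split_ord /=; congr (_ + _).
by apply: eq_bigr => k _; rewrite shiftk_shiftk addnC.
Qed.

Lemma birkhoff1 x : birkhoff f x 1 = f x.
Proof. by rewrite /birkhoff big_ord1; congr f; apply: funext => j; rewrite /shiftk addn0. Qed.

Lemma sum_expr_le n : \sum_(k < n) tau ^+ k <= (1 - tau)^-1.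
Proof.
have tau_norm : `|tau| < 1 by rewrite ger0_norm // ltW.
have := geometric_le_lim n ler01 tau_gt0 tau_norm.
rewrite /series /= big_mkord mul1r.
by rewrite (eq_bigr (fun k : 'I_n => tau ^+ k)) => // k _; rewrite mul1r.
Qed.

Lemma birkhoff_close x y n p : (forall k, (k < n + p)%N -> x k = y k) ->
  `|birkhoff f x n - birkhoff f y n| <= holder_tail p.
Proof.
move=> xy; rewrite /birkhoff -sumrB; apply: le_trans (ler_norm_sum _ _ _) _.
apply: le_trans (_ : \sum_(k < n) K * tau ^+ p.+1 * tau ^+ (n.-1 - k) <= _).
  apply: ler_sum => k _; have k_lt := ltn_ord k.
  apply: le_trans (f_holder (n := (n + p - k)%N) _) _.
    by move=> j jn; apply: xy; lia.
  by rewrite -mulrA -exprD; have -> : (n + p - k = p.+1 + (n.-1 - k))%N by lia.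
rewrite -mulr_sumr /holder_tail; apply: ler_wpM2l; first by rewrite mulr_ge0 // exprn_ge0 // ltW.
rewrite (reindex_inj rev_ord_inj) (eq_bigr (fun k : 'I_n => tau ^+ k)) => [|k _].
  exact: sum_expr_le.
by congr (_ ^+ _); have := ltn_ord k; rewrite /=; lia.
Qed.

Definition block_sum m b := birkhoff f (pad3 m [:: b]) m.+1.

Lemma birkhoff_pad3 m s :
  `|birkhoff f (pad3 m s) (size s * m.+1) - \sum_(b <- s) block_sum m b|
    <= (size s)%:R * holder_tail m.
Proof.
elim: s => [|b s IHs]; first by rewrite /birkhoff big_ord0 big_nil subrr normr0 mul0r.
rewrite (_ : size (b :: s) * m.+1 = m.+1 + size s * m.+1)%N // birkhoff_add shiftk_pad3.
rewrite big_cons (_ : (size (b :: s))%:R = 1 + (size s)%:R :> R) ?mulrDl ?mul1r; last first.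
  by rewrite addrC natr1.
have close : `|birkhoff f (pad3 m (b :: s)) m.+1 - block_sum m b| <= holder_tail m.
  by apply: birkhoff_close => k; apply: pad3_cons_prefix.
rewrite opprD addrACA; exact: le_trans (ler_normD _ _) (lerD close IHs).
Qed.

End BirkhoffSums.

Lemma abs_det_lt1_of_dominated (R : realType) (M : 'M[R]_2) (Kd td u : R) :
  0 <= Kd -> 0 <= td < 1 ->
  (forall n, `|\det (M ^+ n)| <= Kd * td ^+ n * opnorm (M ^+ n) ^+ 2) ->
  (forall n, opnorm (M ^+ n) <= u) -> `|\det M| < 1.
Proof.
move=> Kd_ge0 /andP[td_ge0 td_lt1] dom Mu; rewrite ltNge; apply/negP => det_ge1.
suff : (1 : R) <= 0 by rewrite ler10.
apply: (@le_of_le_add_expr _ _ _ (Kd * u ^+ 2) td); first by rewrite ger0_norm.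
move=> n; rewrite add0r; apply: le_trans (exprn_ege1 n det_ge1) _.
rewrite -normrX -det_expr; apply: le_trans (dom n) _.
rewrite mulrAC; apply: ler_wpM2r; first exact: exprn_ge0.
apply: ler_wpM2l => //; rewrite lerXn2r ?nnegrE ?opnorm_ge0 //.
exact: le_trans (opnorm_ge0 _) (Mu n).
Qed.

Section BoundedCocycle.
Variables (R : realType) (A : 'I_3 -> 'M[R]_2) (c : R).
Variables (f : (nat -> 'I_3) -> R) (K tau C : R).
Hypotheses (A_unit : forall k, A k \in unitmx) (c_neq0 : c != 0) (A3 : A sym3 = c%:M).
Hypotheses (K_ge0 : 0 <= K) (tau_gt0 : 0 < tau) (tau_lt1 : tau < 1).
Hypothesis f_holder : forall (i j : nat -> 'I_3) (n : nat),
  (forall m, (m < n)%N -> i m = j m) -> `|f i - f j| <= K * tau ^+ n.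
Hypothesis cocycle_bound :
  forall i n, `|birkhoff f i n - ln (opnorm (word_prod A i n))| <= C.

Let L := ln `|c|.

Lemma f_const3 : f const3 = L.
Proof.
apply/eqP; rewrite -subr_eq0; apply: contraT => fL.
have fL_gt0 : 0 < `|f const3 - L| by rewrite normr_gt0.
have := archi_boundP (divr_ge0 (le_trans (normr_ge0 _) (cocycle_bound const3 0)) (ltW fL_gt0)).
set n := Num.Def.archi_bound _; rewrite ltr_pdivrMr // => n_big.
have := cocycle_bound const3 n.
rewrite (word_prod_const3 A3) opnorm_scalar normrX lnXn ?normr_gt0 //.
rewrite /birkhoff (eq_bigr (fun=> f const3)) // sumr_const card_ord -/L -mulrnBl normrMn.
by rewrite -mulr_natr mulrC; move: n_big; lra.
Qed.

Definition block_rate_seq b m := block_sum f m b - m%:R * L.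

Lemma block_rate_seq_step b m :
  `|block_rate_seq b m.+1 - block_rate_seq b m| <= holder_tail K tau m - holder_tail K tau m.+1.
Proof.
rewrite (holder_tailS K tau_lt1) /block_rate_seq /block_sum (_ : m.+2 = 1 + m.+1)%N //.
rewrite birkhoff_add birkhoff1 shift1_pad3 -natr1.
have -> : forall x y : R, x + y - (m%:R + 1) * L - (y - m%:R * L) = x - L by move=> x y; ring.
by rewrite -f_const3; apply: f_holder => k km; rewrite pad3_lt.
Qed.

(* the limit of [block_rate_seq b], reached from below by the increasing sequence
   [block_rate_seq b m - holder_tail m] *)
Definition block_rate b := sup (range (fun m => block_rate_seq b m - holder_tail K tau m)).

Lemma block_rate_approx b m : `|block_rate_seq b m - block_rate b| <= holder_tail K tau m.
Proof.
apply: sup_approx => [n|n]; first exact: holder_tail_ge0.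
exact: block_rate_seq_step.
Qed.

Lemma symb_prod_unitmx s : symb_prod A s \in unitmx.
Proof.
elim: s => [|b s IHs]; first by rewrite /symb_prod big_nil unitmx1.
by rewrite /symb_prod big_cons -mulmxE unitmx_mul A_unit.
Qed.

Lemma sum_block_rate_approx m s :
  `|\sum_(b <- s) block_sum f m b - (m * size s)%:R * L - \sum_(b <- s) block_rate b|
    <= (size s)%:R * holder_tail K tau m.
Proof.
elim: s => [|b s IHs]; first by rewrite !big_nil muln0 mul0r !subrr normr0 mul0r.
have sizeS : (size (b :: s))%:R = (size s)%:R + 1 :> R by rewrite natr1.
have := block_rate_approx b m; move: IHs; rewrite !big_cons mulnS natrD sizeS /block_rate_seq.
by rewrite !ler_norml => /andP[h1 h2] /andP[h3 h4]; apply/andP; split; lra.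
Qed.

Lemma ln_opnorm_symb_prod s :
  `|ln (opnorm (symb_prod A s)) - \sum_(b <- s) block_rate b| <= C.
Proof.
have tau_norm : `|tau| < 1 by rewrite ger0_norm // ltW.
apply: (le_of_le_add_expr (k := 2 * (size s)%:R * (K * tau / (1 - tau))) tau_norm) => m.
have eps : (size s)%:R * holder_tail K tau m = (size s)%:R * (K * tau / (1 - tau)) * tau ^+ m.
  by rewrite /holder_tail exprS; field; rewrite subr_eq0 eq_sym lt_eqF.
have word := cocycle_bound (pad3 m s) (size s * m.+1).
rewrite (word_prod_pad3 A3) opnormZ normrX lnM ?posrE ?exprn_gt0 ?normr_gt0 // in word.
  rewrite lnXn ?normr_gt0 // -/L -mulr_natl in word.
  have sums := birkhoff_pad3 K_ge0 tau_gt0 tau_lt1 f_holder m s.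
  have rates := sum_block_rate_approx m s.
  rewrite eps in sums rates; rewrite natrM in rates; move: word sums rates.
  by rewrite !ler_norml => /andP[w1 w2] /andP[s1 s2] /andP[r1 r2]; apply/andP; split; lra.
exact/opnorm_unitmx_gt0/symb_prod_unitmx.
Qed.

Definition scaled_gen b := expR (- block_rate b) *: A (symb b).

Definition scaled_monoid (M : 'M[R]_2) := exists s, M = \prod_(b <- s) scaled_gen b.

Lemma scaled_monoid1 : scaled_monoid 1.
Proof. by exists [::]; rewrite big_nil. Qed.

Lemma scaled_monoidM M N : scaled_monoid M -> scaled_monoid N -> scaled_monoid (M * N).
Proof. by move=> [s ->] [t ->]; exists (s ++ t); rewrite big_cat. Qed.

Lemma scaled_monoid_gen b : scaled_monoid (scaled_gen b).
Proof. by exists [:: b]; rewrite big_seq1. Qed.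

Lemma opnorm_scaled_monoid M : scaled_monoid M -> expR (- C) <= opnorm M <= expR C.
Proof.
case=> s ->; have -> : \prod_(b <- s) scaled_gen b
    = expR (- \sum_(b <- s) block_rate b) *: symb_prod A s.
  elim: s => [|b s IHs]; first by rewrite /symb_prod !big_nil oppr0 expR0 scale1r.
  rewrite !big_cons IHs /symb_prod big_cons /scaled_gen -scalerAl -scalerAr scalerA -expRD.
  by rewrite opprD.
rewrite opnormZ ger0_norm ?expR_ge0 //.
rewrite -[opnorm _]lnK ?posrE ?opnorm_unitmx_gt0 ?symb_prod_unitmx //.
by rewrite -expRD !ler_expR addrC -ler_norml ln_opnorm_symb_prod.
Qed.

Lemma abs_det_scaled_gen_lt1 b : dominated_pair (A sym1) (A sym2) -> `|\det (scaled_gen b)| < 1.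
Proof.
case=> Kd [td [Kd_gt0 [td_gt0 [td_lt1 dom]]]].
apply: (abs_det_lt1_of_dominated (Kd := Kd) (td := td) (u := expR C)) => [||n|n].
- exact: ltW.
- by rewrite ltW.
- have := dom n (fun=> b); rewrite /= prodr_const card_ord.
  rewrite (_ : (if b then _ else _) = A (symb b)); last by case: b.
  have An_unit : A (symb b) ^+ n \in unitmx by apply: unitrX.
  rewrite ler_pdivrMr ?exprn_gt0 ?opnorm_unitmx_gt0 // => domn.
  rewrite /scaled_gen exprZn detZ opnormZ normrM !normrX exprMn mulrCA.
  by apply: ler_wpM2l; rewrite ?exprn_ge0.
- have := monoid_expr scaled_monoid1 scaled_monoidM n (scaled_monoid_gen b).
  by case/opnorm_scaled_monoid/andP.
Qed.

Lemma common_eigenvector_of_bounded_cocycle : dominated_pair (A sym1) (A sym2) ->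
  exists v : 'cV[R]_2,
    v != 0 /\ (exists a, A sym1 *m v = a *: v) /\ (exists b, A sym2 *m v = b *: v).
Proof.
move=> dom.
have det_neq0 b : \det (scaled_gen b) != 0.
  rewrite detZ mulf_neq0 //; first by rewrite expf_neq0 // gt_eqF // expR_gt0.
  by rewrite -unitfE -unitmxE A_unit.
have [v [v0 [[a1 Xv] [a2 Yv]]]] := monoid_common_eigenvector scaled_monoid1 scaled_monoidM
  (expR_gt0 (- C)) opnorm_scaled_monoid (scaled_monoid_gen true) (scaled_monoid_gen false)
  (det_neq0 true) (abs_det_scaled_gen_lt1 true dom) (ltW (abs_det_scaled_gen_lt1 false dom)).
have unscale b : A (symb b) = expR (block_rate b) *: scaled_gen b.
  by rewrite /scaled_gen scalerA -expRD subrr expR0 scale1r.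
exists v; split; first exact: v0.
split; [exists (expR (block_rate true) * a1) | exists (expR (block_rate false) * a2)].
  by rewrite (unscale true) -scalemxAl Xv scalerA.
by rewrite (unscale false) -scalemxAl Yv scalerA.
Qed.

End BoundedCocycle.

Theorem lemma4p6 (R : realType) (A : 'I_3 -> 'M[R]_2) (c : R) :
  (forall k, A k \in unitmx) ->
  c != 0 -> A sym3 = c%:M ->
  irreducible_pair (A sym1) (A sym2) -> dominated_pair (A sym1) (A sym2) ->
  forall (f : (nat -> 'I_3) -> R), holder f ->
  forall C : R, 0 < C ->
  exists (i : nat -> 'I_3) (n : nat),
    `| birkhoff f i n - ln (opnorm (word_prod A i n)) | > C.
Proof.
move=> A_unit c_neq0 A3 irr dom f [K [tau [K_gt0 [tau_gt0 [tau_lt1 f_holder]]]]] C _.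
apply: contrapT => unbounded; apply: irr.
have cocycle_bound i n : `|birkhoff f i n - ln (opnorm (word_prod A i n))| <= C.
  by rewrite leNgt; apply/negP => gtC; apply: unbounded; exists i, n.
exact: (common_eigenvector_of_bounded_cocycle A_unit c_neq0 A3 (ltW K_gt0) tau_gt0 tau_lt1
  f_holder cocycle_bound dom).
Qed.
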